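(* Let $q(n)$ denote the number of partitions of $n$ into distinct parts, with $q(0)=1$ and $q(n)=0$ for $n<0$, and define $s(n)=q(n)-2q(n-1)+q(n-2)$ for $n\ge 0$. Then for every integer $n\ge 6$, $s(n)$ equals the number of partitions of $n$ into distinct parts $p_1>p_2>\dots>p_k$ with $k\ge 3$ such that $$p_1=p_2+1=p_3+2>p_4>\dots>p_k>1,$$ i.e. strict partitions of $n$ with at least three parts, the three largest parts consecutive integers, and the smallest part at least $2$.
   Context: $s(n)$ is the second difference of the sequence $q(n)$ of numbers of strict partitions (partitions into distinct parts). *)

From mathcomp Require Import all_boot all_order all_algebra.
Set Implicit Arguments. Unset Strict Implicit. Unset Printing Implicit Defensive.
Import GRing.Theory Num.Theory.

(* A partition into distinct parts is encoded by its (finite) set of parts;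
   every part of a strict partition of n lies in {0,...,n}, so we use
   subsets of 'I_n.+1.  [parts A] lists the parts in decreasing order
   p_1 > p_2 > ... > p_k. *)
Definition parts (N : nat) (A : {set 'I_N}) : seq nat :=
  sort geq (map (@nat_of_ord N) (enum A)).

Definition strict_partitions (n : nat) : {set {set 'I_n.+1}} :=
  [set A : {set 'I_n.+1} | all (fun p => 0 < p) (parts A) && (sumn (parts A) == n)].

Definition q (n : nat) : nat := #|strict_partitions n|.

Definition qz (z : int) : nat :=
  match z with Posz m => q m | Negz _ => 0%N end.

Definition s (n : nat) : int :=
  ((qz n)%:Z - 2 * (qz (n%:Z - 1))%:Z + (qz (n%:Z - 2))%:Z)%R.

Definition good_parts (p : seq nat) : bool :=
  [&& 3 <= size p,
      nth 0 p 0 == nth 0 p 1 + 1,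
      nth 0 p 1 + 1 == nth 0 p 2 + 2 &
      1 < last 0 p].

From mathcomp Require Import all_boot all_order all_algebra.
From mathcomp Require Import zify.

(* Let d(m) count the strict partitions of m into parts at least 2, e(m) those
   among them whose two largest parts are consecutive, and g(m) those whose
   three largest parts are consecutive (the partitions of the theorem).
   Removing a part 1 gives q(m) = d(m) + d(m-1).  Lowering the largest part by
   one when it is not adjacent to the next one gives d(m) = d(m-1) + e(m).
   Lowering the two largest parts by one when the second is not adjacent to
   the third gives e(m) = e(m-2) + g(m) for m >= 6.  Hence
   s(n) = d(n) - d(n-1) - d(n-2) + d(n-3) = e(n) - e(n-2) = g(n).
   Below, partitions are strictly decreasing sequences, and d, e, g are
   [npartn strict_partn_gt1], [npartn partn_gt1_top2], [npartn partn_gt1_top3]. *)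

Set Implicit Arguments.
Unset Strict Implicit.
Unset Printing Implicit Defensive.

Lemma gtn_trans : transitive gtn. Proof. exact: rev_trans ltn_trans. Qed.

Lemma geq_total : total geq. Proof. by move=> a b; exact: leq_total. Qed.

Section PartsOfSets.

Variable N : nat.
Implicit Types (A : {set 'I_N}) (s : seq nat).

Lemma mem_parts A x : (x \in parts A) = (x \in map val (enum A)).
Proof. by rewrite /parts mem_sort. Qed.

Lemma mem_parts_ord A (i : 'I_N) : (val i \in parts A) = (i \in A).
Proof. by rewrite mem_parts (mem_map val_inj) mem_enum. Qed.

Lemma parts_inj : injective (@parts N).
Proof. by move=> A B eqAB; apply/setP => i; rewrite -!mem_parts_ord eqAB. Qed.

Lemma sorted_parts A : sorted gtn (parts A).
Proof.
rewrite gtn_sorted_uniq_geq sort_uniq (map_inj_uniq val_inj) enum_uniq.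
by rewrite /= sort_sorted //; exact: geq_total.
Qed.

Lemma parts_ltn A : all (fun x => x < N) (parts A).
Proof.
by apply/allP => x; rewrite mem_parts => /mapP[i _ ->]; exact: ltn_ord.
Qed.

Definition dseqs : seq (seq nat) := map (@parts N) (enum [set: {set 'I_N}]).

Lemma uniq_dseqs : uniq dseqs.
Proof. by rewrite (map_inj_uniq parts_inj) enum_uniq. Qed.

Lemma mem_dseqs s : (s \in dseqs) = sorted gtn s && all (fun x => x < N) s.
Proof.
apply/mapP/andP => [[A _ ->]|[s_sorted s_lt]].
  by split; [exact: sorted_parts | exact: parts_ltn].
exists [set i : 'I_N | val i \in s]; first by rewrite mem_enum inE.
apply: (irr_sorted_eq gtn_trans ltnn) => // [|x]; first exact: sorted_parts.
rewrite mem_parts; apply/idP/mapP => [x_s|[i]]; last first.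
  by rewrite mem_enum inE => ? ->.
by exists (Ordinal (allP s_lt x x_s)); rewrite ?mem_enum ?inE.
Qed.

Lemma card_parts (P : pred (seq nat)) :
  #|[set A : {set 'I_N} | P (parts A)]| = count P dseqs.
Proof.
rewrite /dseqs count_map cardE -size_filter enum_setT /enum_mem; congr size.
by apply: eq_filter => A; rewrite !inE.
Qed.

End PartsOfSets.

Lemma sorted_mem_dseqs N s : sorted gtn s -> sumn s < N -> s \in dseqs N.
Proof.
move=> s_sorted sum_lt; rewrite mem_dseqs s_sorted.
apply/allP => x x_s; apply: leq_ltn_trans sum_lt.
by rewrite (perm_sumn (perm_to_rem x_s)) /= leq_addr.
Qed.

Lemma count_dseqs_bij N M (P Q : pred (seq nat)) (f g : seq nat -> seq nat) :
    (forall s, P s -> sumn s < N) -> (forall s, Q s -> sumn s < M) ->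
    (forall s, sorted gtn s -> P s -> sorted gtn (f s) && Q (f s)) ->
    (forall s, sorted gtn s -> Q s -> sorted gtn (g s) && P (g s)) ->
    (forall s, sorted gtn s -> P s -> g (f s) = s) ->
    (forall s, sorted gtn s -> Q s -> f (g s) = s) ->
  count P (dseqs N) = count Q (dseqs M).
Proof.
move=> P_lt Q_lt fPQ gQP fK gK.
rewrite -!size_filter -(size_map f); apply/perm_size/uniq_perm.
- rewrite map_inj_in_uniq ?filter_uniq ?uniq_dseqs // => x y.
  rewrite !mem_filter !mem_dseqs => /and3P[Px x_sorted _] /and3P[Py y_sorted _].
  by move=> fxy; rewrite -(fK x) // fxy fK.
- by rewrite filter_uniq ?uniq_dseqs.
move=> y; rewrite mem_filter; apply/mapP/andP => [[x]|[Qy]].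
  rewrite mem_filter mem_dseqs => /and3P[Px x_sorted _] ->.
  have /andP[fx_sorted Qfx] := fPQ x x_sorted Px.
  by rewrite Qfx sorted_mem_dseqs ?Q_lt.
rewrite mem_dseqs => /andP[y_sorted _].
have /andP[gy_sorted Pgy] := gQP y y_sorted Qy.
by exists (g y); rewrite ?gK // mem_filter Pgy sorted_mem_dseqs ?P_lt.
Qed.

Lemma count_predIC (T : Type) (a b : pred T) (l : seq T) :
  count a l = count (predI a b) l + count (predI a (predC b)) l.
Proof.
rewrite -size_filter -(count_predC b) !count_filter.
by congr (_ + _); apply: eq_count => x /=; rewrite andbC.
Qed.

Lemma sorted_rcons_lt s y :
  sorted gtn s -> all (fun x => y < x) s -> sorted gtn (rcons s y).
Proof.
case: s => // x s s_sorted s_gt.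
rewrite /= rcons_path; move: s_sorted => /= -> /=.
exact: (allP s_gt) _ (mem_last x s).
Qed.

Definition strict_partn m s := all (fun x => 0 < x) s && (sumn s == m).
Definition strict_partn_gt1 m s := all (fun x => 1 < x) s && (sumn s == m).
Definition top2_consec s := if s is x :: y :: _ then x == y.+1 else false.
Definition top3_consec s :=
  if s is x :: y :: z :: _ then (x == y.+1) && (y == z.+1) else false.
Definition partn_gt1_top2 m s := strict_partn_gt1 m s && top2_consec s.
Definition partn_gt1_top3 m s := strict_partn_gt1 m s && top3_consec s.

Definition npartn (P : nat -> pred (seq nat)) m := count (P m) (dseqs m.+1).

Lemma q_npartn m : q m = npartn strict_partn m.
Proof. exact: card_parts. Qed.

Lemma all_gt1E s :
  all (fun x => 1 < x) s = all (fun x => 0 < x) s && (1 \notin s).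
Proof.
elim: s => //= x s ->; rewrite inE negb_or.
by case: x => [|[|x]] //=; rewrite andbF.
Qed.

Lemma rcons_filter1 s : sorted gtn s -> all (fun x => 0 < x) s -> 1 \in s ->
  rcons [seq x <- s | x != 1] 1 = s.
Proof.
move=> s_sorted s_pos s1; apply: (irr_sorted_eq gtn_trans ltnn) => // [|x].
  apply: sorted_rcons_lt; first exact: (sorted_filter gtn_trans).
  by apply/allP => x; rewrite mem_filter /= => /andP[x_ne1 /(allP s_pos)] /=; lia.
by rewrite mem_rcons inE mem_filter; case: eqP => // ->.
Qed.

Lemma npartn_strict_partn m :
  npartn strict_partn m.+1 =
  npartn strict_partn_gt1 m.+1 + npartn strict_partn_gt1 m.
Proof.
rewrite /npartn (count_predIC _ (fun s => 1 \in s)) addnC.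
congr (_ + _).
  by apply: eq_count => s /=; rewrite /strict_partn_gt1 all_gt1E andbAC.
apply: (count_dseqs_bij (f := filter (fun x => x != 1)) (g := rcons^~ 1));
  rewrite /strict_partn /strict_partn_gt1.
- by move=> s /andP[/andP[_ /eqP ->]].
- by move=> s /andP[_ /eqP ->].
- move=> s s_sorted /= /andP[/andP[s_pos /eqP s_sum] s1].
  rewrite (sorted_filter gtn_trans) //=; apply/andP; split.
    apply/allP => x; rewrite mem_filter /=.
    by move=> /andP[x_ne1 /(allP s_pos)] /=; lia.
  apply/eqP; move: s_sum.
  by rewrite -{1}(rcons_filter1 s_sorted s_pos s1) sumn_rcons addn1 => -[<-].
- move=> s s_sorted /andP[s_gt1 /eqP s_sum].
  rewrite sorted_rcons_lt //= all_rcons sumn_rcons mem_rcons inE eqxx /=.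
  rewrite (sub_all _ s_gt1) => [|x]; last exact: ltnW.
  by apply/eqP; lia.
- by move=> s s_sorted /= /andP[/andP[s_pos _] s1]; exact: rcons_filter1.
- move=> s _ /andP[s_gt1 _]; rewrite filter_rcons /=.
  by apply/all_filterP/(sub_all _ s_gt1) => x /=; case: eqP => // ->.
Qed.

Definition dec_head s := if s is x :: t then x.-1 :: t else s.
Definition inc_head s := if s is x :: t then x.+1 :: t else s.

Lemma npartn_strict_partn_gt1 m : 1 < m ->
  npartn strict_partn_gt1 m.+1 =
  npartn strict_partn_gt1 m + npartn partn_gt1_top2 m.+1.
Proof.
move=> m_gt1; rewrite /npartn (count_predIC _ top2_consec) addnC; congr (_ + _).
apply: (count_dseqs_bij (f := dec_head) (g := inc_head));
  rewrite /strict_partn_gt1.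
- by move=> s /andP[/andP[_ /eqP ->]].
- by move=> s /andP[_ /eqP ->].
- by case=> [|x [|y t]] /=; lia.
- by case=> [|x [|y t]] /=; lia.
- by case=> [|x t] //= _ /andP[/andP[/andP[x_gt1 _] _] _]; rewrite prednK //; lia.
- by case.
Qed.

Definition dec_head2 s := if s is x :: y :: t then x.-1 :: y.-1 :: t else s.
Definition inc_head2 s := if s is x :: y :: t then x.+1 :: y.+1 :: t else s.

Lemma npartn_partn_gt1_top2 m : 3 < m ->
  npartn partn_gt1_top2 m.+2 =
  npartn partn_gt1_top2 m + npartn partn_gt1_top3 m.+2.
Proof.
move=> m_gt3; rewrite /npartn (count_predIC _ top3_consec) addnC.
congr (_ + _); last first.
  apply: eq_count => -[|x [|y [|z t]]];
  by rewrite /partn_gt1_top2 /partn_gt1_top3 /= ?andbF //; lia.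
apply: (count_dseqs_bij (f := dec_head2) (g := inc_head2));
  rewrite /partn_gt1_top2 /strict_partn_gt1.
- by move=> s /andP[/andP[/andP[_ /eqP ->]]].
- by move=> s /andP[/andP[_ /eqP ->]]; lia.
- by case=> [|x [|y [|z t]]] /=; lia.
- by case=> [|x [|y [|z t]]] /=; lia.
- case=> [|x [|y t]] //= _ /andP[/andP[/andP[/and3P[x_gt1 y_gt1 _] _] _] _].
  by rewrite !prednK //; lia.
- by case=> [|x [|y t]].
Qed.

Lemma path_gtn_all_gtE k x s :
  path gtn x s -> all (fun y => k < y) (x :: s) = (k < last x s).
Proof.
elim: s x => [|y s IH] x /=; first by rewrite andbT.
case/andP=> y_lt_x ys_path; rewrite -IH //=.
by apply/andb_idl => /andP[k_lt_y _]; exact: ltn_trans y_lt_x.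
Qed.

Lemma card_good_parts n :
  #|[set A in strict_partitions n | good_parts (parts A)]| =
  npartn partn_gt1_top3 n.
Proof.
rewrite /npartn -card_parts; apply: eq_card => A; rewrite !inE.
have := sorted_parts A; case: (parts A) => [|a [|b [|c t]]] s_sorted;
  rewrite /partn_gt1_top3 /good_parts ?andbF //.
rewrite /strict_partn /strict_partn_gt1.
rewrite (path_gtn_all_gtE 0 s_sorted) (path_gtn_all_gtE 1 s_sorted) /=; lia.
Qed.

Theorem proposition1p3 (n : nat) :
  6 <= n ->
  s n = Posz #|[set A in strict_partitions n | good_parts (parts A)]|.
Proof.
case: n => [|[|[|m]]] //; rewrite !ltnS => m_gt2.
rewrite card_good_parts /s.
have -> : (m.+3%:Z - 1)%R = m.+2 by lia.
have -> : (m.+3%:Z - 2)%R = m.+1 by lia.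
rewrite /= !q_npartn.
have := npartn_strict_partn m.+2; have := npartn_strict_partn m.+1.
have := npartn_strict_partn m; have := @npartn_strict_partn_gt1 m.+2 isT.
have := npartn_strict_partn_gt1 (ltnW m_gt2).
have := @npartn_partn_gt1_top2 m.+1 m_gt2.
lia.
Qed.
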